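(* Suppose $\nu=\nu_1\times\nu_2\times\cdots\times\nu_d$ is a product probability measure on $\mathcal X=\{1,\dots,B\}^d$. Let $\mathfrak T_1$ and $\mathfrak T_2$ be two tree structures, and let $I_1,I_2\subset\{1,\dots,d\}$ be disjoint sets of indices such that $\mathfrak T_1$ and $\mathfrak T_2$ contain splits only on features in $I_1$ and $I_2$ respectively. Then every local decision stump of $\mathfrak T_1$ is orthogonal in $L^2(\nu)$ to every local decision stump of $\mathfrak T_2$.
   Context: A tree structure is a finite rooted binary tree whose internal nodes carry splitting rules $(v,t)$; each node corresponds to a rectangular region $\mathfrak t\subset\mathcal X$, with the root corresponding to $\mathcal X$, and an internal node $\mathfrak t$ with rule $(v,t)$ has children $\mathfrak t_L=\{\mathbf x\in\mathfrak t:x_v\le t\}$ and $\mathfrak t_R=\{\mathbf x\in\mathfrak t:x_v>t\}$ (both nonempty). A tree ''splits on feature $v$'' if some internal node has a rule with feature $v$. For each internal node $\mathfrak t$, the local decision stump is the function $$\psi(\mathbf x)=\frac{\nu(\mathfrak t_R)\mathbf 1\{\mathbf x\in\mathfrak t_L\}-\nu(\mathfrak t_L)\mathbf 1\{\mathbf x\in\mathfrak t_R\}}{\sqrt{\nu(\mathfrak t_L)\nu(\mathfrak t_R)}}.$$ *)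

From HB Require Import structures.
From mathcomp Require Import all_boot all_order all_algebra.
From mathcomp Require Import reals.
Set Implicit Arguments. Unset Strict Implicit. Unset Printing Implicit Defensive.
Import Order.TTheory GRing.Theory Num.Theory.
Local Open Scope ring_scope.

(* Feature space X = {1,...,B}^d, encoded as functions 'I_d -> 'I_B
   (values 0..B-1, order preserved). *)
Definition pt (d B : nat) := {ffun 'I_d -> 'I_B}.

Inductive tree (d B : nat) : Type :=
| Leaf
| Node of 'I_d & 'I_B & tree d B & tree d B.
Arguments Leaf {d B}.

Section Trees.
Variables (d B : nat).

Definition left_child (A : {set pt d B}) (v : 'I_d) (t : 'I_B) : {set pt d B} :=
  [set x in A | (x v <= t)%N].
Definition right_child (A : {set pt d B}) (v : 'I_d) (t : 'I_B) : {set pt d B} :=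
  [set x in A | (t < x v)%N].

Fixpoint wf_tree (T : tree d B) (A : {set pt d B}) : bool :=
  match T with
  | Leaf => true
  | Node v t L R =>
      [&& left_child A v t != set0, right_child A v t != set0,
          wf_tree L (left_child A v t) & wf_tree R (right_child A v t)]
  end.

Fixpoint internal_nodes (T : tree d B) (A : {set pt d B})
  : seq ({set pt d B} * 'I_d * 'I_B) :=
  match T with
  | Leaf => [::]
  | Node v t L R =>
      (A, v, t) :: internal_nodes L (left_child A v t)
                ++ internal_nodes R (right_child A v t)
  end.

Definition is_tree_structure (T : tree d B) := wf_tree T setT.
Definition nodes (T : tree d B) := internal_nodes T setT.

Definition splits_only_on (T : tree d B) (I : {set 'I_d}) : Prop :=
  forall n, n \in nodes T -> n.1.2 \in I.

Variable R : realType.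

Definition is_prob (p : 'I_B -> R) : Prop :=
  (forall b, 0 <= p b) /\ \sum_b p b = 1.

Definition prod_weight (p : 'I_d -> 'I_B -> R) (x : pt d B) : R :=
  \prod_v p v (x v).

Definition nu (p : 'I_d -> 'I_B -> R) (A : {set pt d B}) : R :=
  \sum_(x in A) prod_weight p x.

Definition stump (p : 'I_d -> 'I_B -> R) (n : {set pt d B} * 'I_d * 'I_B)
    (x : pt d B) : R :=
  let A := n.1.1 in let v := n.1.2 in let t := n.2 in
  let AL := left_child A v t in let AR := right_child A v t in
  (nu p AR * (x \in AL)%:R - nu p AL * (x \in AR)%:R)
    / Num.sqrt (nu p AL * nu p AR).

Definition L2dot (p : 'I_d -> 'I_B -> R) (f g : pt d B -> R) : R :=
  \sum_x prod_weight p x * f x * g x.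

End Trees.

(* Under a product measure, functions of disjoint blocks of coordinates are
   independent, so E[f g] = E[f] E[g].  The regions and rules of a tree that
   only splits on features in I are determined by the coordinates in I, hence
   so are its stumps; and every stump has mean zero under nu, because
   nu(t_R) nu(t_L) - nu(t_L) nu(t_R) = 0.  Thus E[psi_1 psi_2] = 0. *)

From HB Require Import structures.
From mathcomp Require Import all_boot all_order all_algebra.
From mathcomp Require Import reals.
From mathcomp Require Import ring.
Import Order.TTheory GRing.Theory Num.Theory.
Set Implicit Arguments. Unset Strict Implicit.
Local Open Scope ring_scope.

Section DependenceOnCoordinates.
Variables (d B : nat).

Definition depends_only_on (T : Type) (I : {set 'I_d}) (F : pt d B -> T) :=
  forall x z : pt d B, {in I, x =1 z} -> F x = F z.

Lemma depends_only_onS (T : Type) (I J : {set 'I_d}) (F : pt d B -> T) :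
  I \subset J -> depends_only_on I F -> depends_only_on J F.
Proof. by move=> /subsetP IJ FI x z xz; apply: FI => v /IJ; apply: xz. Qed.

Section Children.
Variables (I : {set 'I_d}) (A : {set pt d B}) (v : 'I_d) (t : 'I_B).
Hypotheses (AI : depends_only_on I (fun x => x \in A)) (vI : v \in I).

Lemma left_child_depends_only_on :
  depends_only_on I (fun x => x \in left_child A v t).
Proof. by move=> x z xz; rewrite /= !inE (AI xz) (xz v vI). Qed.

Lemma right_child_depends_only_on :
  depends_only_on I (fun x => x \in right_child A v t).
Proof. by move=> x z xz; rewrite /= !inE (AI xz) (xz v vI). Qed.

End Children.

Lemma internal_nodes_depend_only_on (I : {set 'I_d}) (T : tree d B)
    (A : {set pt d B}) :
  depends_only_on I (fun x => x \in A) ->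
  (forall n, n \in internal_nodes T A -> n.1.2 \in I) ->
  forall n, n \in internal_nodes T A ->
  depends_only_on I (fun x => x \in n.1.1).
Proof.
elim: T A => [|v t L IHL Rt IHR] A AI splitsI n //=.
have vI : v \in I by apply: (splitsI (A, v, t)); rewrite inE eqxx.
rewrite inE => /predU1P [-> // | ]; rewrite mem_cat => /orP [nL | nR].
  apply: IHL nL; first exact: left_child_depends_only_on.
  by move=> m mL; apply: splitsI; rewrite inE mem_cat mL orbT.
apply: IHR nR; first exact: right_child_depends_only_on.
by move=> m mR; apply: splitsI; rewrite inE mem_cat mR !orbT.
Qed.

Lemma nodes_depend_only_on (I : {set 'I_d}) (T : tree d B) :
  splits_only_on T I ->
  forall n, n \in nodes T -> depends_only_on I (fun x => x \in n.1.1).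
Proof. by apply: internal_nodes_depend_only_on => x z _; rewrite !inE. Qed.

Lemma stump_depends_only_on (R : realType) (p : 'I_d -> 'I_B -> R)
    (I : {set 'I_d}) (n : {set pt d B} * 'I_d * 'I_B) :
  depends_only_on I (fun x => x \in n.1.1) -> n.1.2 \in I ->
  depends_only_on I (stump p n).
Proof. by move=> AI vI x z xz; rewrite /stump !inE (AI _ _ xz) (xz _ vI). Qed.

Lemma node_stump_depends_only_on (R : realType) (p : 'I_d -> 'I_B -> R)
    (I : {set 'I_d}) (T : tree d B) n :
  splits_only_on T I -> n \in nodes T -> depends_only_on I (stump p n).
Proof.
move=> splitsI nT.
exact: stump_depends_only_on (nodes_depend_only_on splitsI nT) (splitsI _ nT).
Qed.

End DependenceOnCoordinates.

Section ProductMeasure.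
Variables (R : realType) (d B : nat) (p : 'I_d -> 'I_B -> R).

Definition expectation (F : pt d B -> R) := \sum_x prod_weight p x * F x.

Lemma sum_prod_weight : (forall v, \sum_b p v b = 1) ->
  \sum_x prod_weight p x = 1.
Proof.
move=> p_sum1; rewrite /prod_weight -(bigA_distr_bigA (fun v b => p v b)) /=.
exact: big1.
Qed.

Lemma expectation_indicator (A : {set pt d B}) :
  expectation (fun x => (x \in A)%:R) = nu p A.
Proof.
rewrite /expectation /nu (bigID (fun x => x \in A)) /= [X in _ + X]big1 ?addr0.
  by apply: eq_bigr => x ->; rewrite mulr1.
by move=> x /negbTE ->; rewrite mulr0.
Qed.

Lemma expectation_stump n : expectation (stump p n) = 0.
Proof.
rewrite /stump; set AL := left_child _ _ _; set AR := right_child _ _ _.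
set c := Num.sqrt _.
have -> : expectation (fun x => (nu p AR * (x \in AL)%:R
                                 - nu p AL * (x \in AR)%:R) / c) =
          (nu p AR * expectation (fun x => (x \in AL)%:R)
           - nu p AL * expectation (fun x => (x \in AR)%:R)) / c.
  rewrite /expectation 2![in RHS]mulr_sumr -sumrB mulr_suml.
  by apply: eq_bigr => x _; ring.
by rewrite !expectation_indicator [nu p AR * _]mulrC subrr mul0r.
Qed.

Definition splice (I : {set 'I_d}) (x y : pt d B) : pt d B :=
  [ffun v => if v \in I then x v else y v].

Lemma splice_pairK (I : {set 'I_d}) :
  cancel (fun q : pt d B * pt d B => (splice I q.1 q.2, splice I q.2 q.1))
         (fun q => (splice I q.1 q.2, splice I q.2 q.1)).
Proof.
by move=> [x y]; congr pair; apply/ffunP => v; rewrite !ffunE; case: (v \in I).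
Qed.

Lemma prod_weight_splice (I : {set 'I_d}) (x y : pt d B) :
  prod_weight p (splice I x y) * prod_weight p (splice I y x) =
  prod_weight p x * prod_weight p y.
Proof.
rewrite /prod_weight -!big_split /=; apply: eq_bigr => v _.
by rewrite !ffunE; case: (v \in I); rewrite // mulrC.
Qed.

Lemma L2dot_independent (I : {set 'I_d}) (F G : pt d B -> R) :
  (forall v, \sum_b p v b = 1) ->
  depends_only_on I F -> depends_only_on (~: I) G ->
  L2dot p F G = expectation F * expectation G.
Proof.
move=> p_sum1 FI GIc.
(* Multiply by 1 = \sum_y w y and reindex the double sum by the involution
   exchanging the I-coordinates of x and y, which preserves w x * w y. *)
rewrite /L2dot /expectation -[LHS]mulr1 -(sum_prod_weight p_sum1).
rewrite mulr_suml; under eq_bigr do rewrite mulr_sumr.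
rewrite mulr_suml; under [RHS]eq_bigr do rewrite mulr_sumr.
rewrite !pair_bigA (reindex_inj (can_inj (splice_pairK I))) /=.
apply: eq_bigr => -[x y] _ /=.
have -> : F (splice I x y) = F x by apply: FI => v vI; rewrite ffunE vI.
have -> : G (splice I x y) = G y.
  by apply: GIc => v; rewrite inE => /negbTE vI; rewrite ffunE vI.
have := prod_weight_splice I x y.
move: (prod_weight p (splice I x y)) (prod_weight p (splice I y x))
  (prod_weight p x) (prod_weight p y) (F x) (G y) => a b a' b' f g ab_eq.
by transitivity (a * b * f * g); [ring | rewrite ab_eq; ring].
Qed.

End ProductMeasure.

Theorem lemmaF1 (R : realType) (d B : nat) (p : 'I_d -> 'I_B -> R)
  (T1 T2 : tree d B) (I1 I2 : {set 'I_d}) :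
  (forall v, is_prob (p v)) ->
  is_tree_structure T1 -> is_tree_structure T2 ->
  [disjoint I1 & I2] ->
  splits_only_on T1 I1 -> splits_only_on T2 I2 ->
  forall n1 n2, n1 \in nodes T1 -> n2 \in nodes T2 ->
  L2dot p (stump p n1) (stump p n2) = 0.
Proof.
move=> p_prob _ _ I12 split1 split2 n1 n2 n1T1 n2T2.
have p_sum1 v : \sum_b p v b = 1 by case: (p_prob v).
have psi1_I1 := node_stump_depends_only_on p split1 n1T1.
have psi2_I2 := node_stump_depends_only_on p split2 n2T2.
have psi2_I1c : depends_only_on (~: I1) (stump p n2).
  by apply: depends_only_onS psi2_I2; rewrite -disjoints_subset disjoint_sym.
by rewrite (L2dot_independent p_sum1 psi1_I1 psi2_I1c) expectation_stump mul0r.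
Qed.
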